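(* Let $p>2$ be prime, $\mathcal{C}$ a $\mathbb{Z}_p\mathbb{Z}_{p^2}$-additive code and $C=\Phi(\mathcal{C})$. If $\mathbf{x}_1,\ldots,\mathbf{x}_n\in\mathcal{C}$ satisfy $\Phi(\mathbf{x}_1)+\Phi(\mathbf{x}_2)+\cdots+\Phi(\mathbf{x}_n)\in K(C)$, then $\Phi(\mathbf{x}_1+\mathbf{x}_2+\cdots+\mathbf{x}_n)\in K(C)$.
   Context: A $\mathbb{Z}_p\mathbb{Z}_{p^2}$-additive code is a subgroup $\mathcal{C}$ of $\mathbb{Z}_p^\alpha\times\mathbb{Z}_{p^2}^\beta$. The Gray map $\phi:\mathbb{Z}_{p^2}\to\mathbb{Z}_p^p$ is $\phi(\theta)=\theta''(1,\ldots,1)+\theta'(0,1,\ldots,p-1)$ with $\theta=\theta''p+\theta'$, $\theta',\theta''\in\{0,\ldots,p-1\}$, and $\Phi(\mathbf{x},\mathbf{y})=(\mathbf{x},\phi(y_1),\ldots,\phi(y_\beta))$. For $C\subseteq\mathbb{Z}_p^n$, $K(C)=\{\mathbf{x}\in\mathbb{Z}_p^n\mid C+\mathbf{x}=C\}$. *)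

From HB Require Import structures.
From mathcomp Require Import all_boot all_order all_algebra.
Set Implicit Arguments. Unset Strict Implicit. Unset Printing Implicit Defensive.
Import GRing.Theory.
Local Open Scope ring_scope.

(* Ambient group Z_p^alpha x Z_{p^2}^beta (p > 2 prime, so 'Z_p and 'Z_(p^2)
   are the genuine rings Z/pZ and Z/p^2Z). *)
Notation ZZ p alpha beta :=
  ('rV['Z_p]_alpha * 'rV['Z_(p ^ 2)]_beta)%type.

Definition additive_code (p alpha beta : nat) (C : {set ZZ p alpha beta}) : Prop :=
  0 \in C /\ (forall x y, x \in C -> y \in C -> x - y \in C).

(* Gray map phi : Z_{p^2} -> Z_p^p,
   phi(theta) = theta''(1,...,1) + theta'(0,1,...,p-1), theta = theta'' p + theta'. *)
Definition gray (p : nat) (theta : 'Z_(p ^ 2)) : 'rV['Z_p]_p :=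
  \row_(j < p) (((val theta %/ p)%N + (val theta %% p)%N * j)%:R : 'Z_p).

Arguments gray : clear implicits.

(* Phi(x, y) = (x, phi(y_1), ..., phi(y_beta)) in Z_p^(alpha + p beta). *)
Definition Phi (p alpha beta : nat) (v : ZZ p alpha beta)
  : 'rV['Z_p]_(alpha + beta * p) :=
  row_mx v.1 (mxvec (\matrix_(i < beta, j < p) gray p (v.2 0 i) 0 j)).

Definition kernel (p n : nat) (C : {set 'rV['Z_p]_n}) : {set 'rV['Z_p]_n} :=
  [set x | [set c + x | c in C] == C].

(* Write S = x_1 + ... + x_n.  Since 0 is a codeword, the translate
   s = Phi(x_1) + ... + Phi(x_n) of 0 lies in C, say s = Phi(z) with z a
   codeword.  The difference of the entries at positions 1 and 0 of phi(theta)
   is theta mod p, an additive reading; hence d = S - z has all its Z_{p^2}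
   coordinates in pZ_{p^2}.  The Gray map is additive along such vectors, so
   Phi(S) = s + Phi(d), and Phi(d) lies in K(C) because Phi(c) + Phi(d) =
   Phi(c + d).  As K(C) is closed under addition, Phi(S) lies in K(C). *)

From HB Require Import structures.
From mathcomp Require Import all_boot all_order all_algebra.
Import GRing.Theory.
Set Implicit Arguments. Unset Strict Implicit.
Local Open Scope ring_scope.

Lemma additive_codeD (p alpha beta : nat) (C : {set ZZ p alpha beta}) :
  additive_code C -> forall u v, u \in C -> v \in C -> u + v \in C.
Proof. by case=> C0 CB u v uC vC; rewrite -[v]opprK -[- v]sub0r !CB. Qed.

Lemma additive_code_sum (p alpha beta : nat) (C : {set ZZ p alpha beta})
    (n : nat) (x : 'I_n -> ZZ p alpha beta) :
  additive_code C -> (forall i, x i \in C) -> \sum_(i < n) x i \in C.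
Proof.
move=> hC hx; apply: (big_ind (fun u => u \in C)) => [|u v|i _].
- exact: hC.1.
- exact: additive_codeD.
- exact: hx.
Qed.

Section Kernel.

Variables (p m : nat) (D : {set 'rV['Z_p]_m}).

Lemma kernelP x : reflect (forall c, c \in D -> c + x \in D) (x \in kernel D).
Proof.
rewrite inE eqEcard card_imset; last exact: addIr.
rewrite leqnn andbT; apply: (iffP subsetP) => [h c cD | h y].
  by apply: h; apply: imset_f.
by case/imsetP=> c cD ->; apply: h.
Qed.

Lemma kernelD x y : x \in kernel D -> y \in kernel D -> x + y \in kernel D.
Proof.
move=> /kernelP hx /kernelP hy; apply/kernelP => c cD.
by rewrite addrA; apply/hy/hx.
Qed.

Lemma kernel_sub x : 0 \in D -> x \in kernel D -> x \in D.
Proof. by move=> D0 /kernelP/(_ 0 D0); rewrite add0r. Qed.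

End Kernel.

Section GrayMap.

Variable p : nat.
Hypothesis p_gt1 : (1 < p)%N.

Definition red (t : 'Z_(p ^ 2)) : 'Z_p := (val t)%:R.

Lemma p2_gt1 : (1 < p ^ 2)%N.
Proof. by rewrite (leq_trans p_gt1) // leq_pmulr // ltnW. Qed.

Lemma val_Zp2D (a b : 'Z_(p ^ 2)) : val (a + b) = ((val a + val b) %% p ^ 2)%N.
Proof. by rewrite -(val_Zp_nat p2_gt1) natrD !natr_Zp. Qed.

Lemma redD a b : red (a + b) = red a + red b.
Proof.
rewrite /red val_Zp2D -Zp_nat_mod // modn_dvdm ?Zp_nat_mod ?natrD //.
by rewrite dvdn_mulr.
Qed.

Lemma redB a b : red (a - b) = red a - red b.
Proof. by rewrite -[in red a](subrK b a) [red (_ + b)]redD addrK. Qed.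

Lemma red_sum n (t : 'I_n -> 'Z_(p ^ 2)) :
  red (\sum_(i < n) t i) = \sum_(i < n) red (t i).
Proof. exact: (big_morph red redD). Qed.

Lemma red_eq0 t : (red t == 0) = (p %| val t)%N.
Proof. by rewrite /red -val_eqE /= (val_Zp_nat p_gt1). Qed.

Lemma grayE t (j : 'I_p) :
  gray p t 0 j = (val t %/ p)%N%:R + red t * (val j)%:R.
Proof. by rewrite /gray mxE natrD natrM Zp_nat_mod. Qed.

Lemma gray_slope t :
  gray p t 0 (Ordinal p_gt1) - gray p t 0 (Ordinal (ltnW p_gt1)) = red t.
Proof. by rewrite !grayE mulr1 mulr0 addr0 addrC addKr. Qed.

Lemma grayD_red0 (a b : 'Z_(p ^ 2)) :
  red b = 0 -> gray p (a + b) = gray p a + gray p b.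
Proof.
move=> b0; apply/rowP=> j; rewrite [RHS]mxE !grayE redD b0.
have /dvdnP [k vb] : (p %| val b)%N by rewrite -red_eq0 b0.
have p_gt0 : (0 < p)%N := ltnW p_gt1.
have mod_div m : (m %% p ^ 2 %/ p = m %/ p %% p)%N by rewrite modn_divl mulnn.
rewrite val_Zp2D vb mod_div Zp_nat_mod // addnC divnMDl // mulnK //.
by rewrite natrD mul0r !addr0 [RHS]addrC addrA.
Qed.

Variables alpha beta : nat.

Lemma Phi_lshift (v : ZZ p alpha beta) k : Phi v 0 (lshift _ k) = v.1 0 k.
Proof. by rewrite /Phi row_mxEl. Qed.

Lemma Phi_rshift (v : ZZ p alpha beta) i j :
  Phi v 0 (rshift _ (mxvec_index i j)) = gray p (v.2 0 i) 0 j.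
Proof. by rewrite /Phi row_mxEr mxvecE mxE. Qed.

Lemma PhiD_red0 (u v : ZZ p alpha beta) :
  (forall i, red (v.2 0 i) = 0) -> Phi (u + v) = Phi u + Phi v.
Proof.
move=> v_red0; apply/rowP=> k; rewrite [RHS]mxE -(splitK k).
case: (split k) => [k'|/mxvec_indexP [i j]] /=.
  by rewrite !Phi_lshift mxE.
by rewrite !Phi_rshift [(u.2 + v.2) 0 i]mxE grayD_red0 // mxE.
Qed.

Lemma Phi0 : Phi (0 : ZZ p alpha beta) = 0.
Proof.
apply: (addrI (Phi 0)); rewrite addr0 -PhiD_red0 ?addr0 // => i.
by rewrite mxE.
Qed.

Lemma sum_Phi_eq_red0 n (x : 'I_n -> ZZ p alpha beta) z :
  \sum_(k < n) Phi (x k) = Phi z ->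
  forall i, red ((\sum_(k < n) x k - z).2 0 i) = 0.
Proof.
move=> xz i; apply/eqP; rewrite /= !mxE redB subr_eq0.
pose slope (w : 'rV['Z_p]_(alpha + beta * p)) :=
  w 0 (rshift alpha (mxvec_index i (Ordinal p_gt1)))
  - w 0 (rshift alpha (mxvec_index i (Ordinal (ltnW p_gt1)))).
have slope_Phi v : slope (Phi v) = red (v.2 0 i).
  by rewrite /slope !Phi_rshift gray_slope.
have sum_snd : (\sum_(k < n) x k).2 = \sum_(k < n) (x k).2.
  exact: (big_morph snd).
rewrite -[red (z.2 0 i)]slope_Phi -xz /slope !summxE -sumrB sum_snd summxE red_sum.
by apply/eqP/eq_bigr => k _; rewrite -slope_Phi.
Qed.

Lemma Phi_kernel_red0 (C : {set ZZ p alpha beta}) v :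
  additive_code C -> v \in C -> (forall i, red (v.2 0 i) = 0) ->
  Phi v \in kernel [set Phi c | c in C].
Proof.
move=> hC vC v_red0; apply/kernelP => _ /imsetP [c cC ->].
by rewrite -PhiD_red0 //; apply/imset_f/additive_codeD.
Qed.

End GrayMap.

Theorem lemma10 (p : nat) (hp : prime p) (hp2 : (2 < p)%N) (alpha beta : nat)
  (C : {set ZZ p alpha beta}) (hC : additive_code C)
  (n : nat) (x : 'I_n -> ZZ p alpha beta) (hx : forall i, x i \in C) :
  \sum_(i < n) Phi (x i) \in kernel [set Phi c | c in C] ->
  Phi (\sum_(i < n) x i) \in kernel [set Phi c | c in C].
Proof.
have p_gt1 : (1 < p)%N := ltnW hp2.
set S := \sum_(i < n) x i => hs.
have /imsetP [z zC hz] : \sum_(i < n) Phi (x i) \in [set Phi c | c in C].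
  by apply: kernel_sub hs; rewrite -(Phi0 p_gt1); apply/imset_f/hC.1.
have dC : S - z \in C := hC.2 _ _ (additive_code_sum hC hx) zC.
have dp := sum_Phi_eq_red0 p_gt1 hz.
rewrite -(subrK z S) addrC PhiD_red0 // -hz.
exact: kernelD hs (Phi_kernel_red0 p_gt1 hC dC dp).
Qed.
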